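(* Let $\psi\in C^1((0,\infty))$ be concave with $\psi'(1)=1$ and $H_\psi<\infty$, let $d>0$, and let $G=(V,E)$ be a finite connected graph satisfying $CD\psi(d,0)$. Then for every positive solution $u$ to the heat equation on $G$, all $x_1,x_2\in V$ and all $0<T_1<T_2$, \[ \log\frac{u(x_1,T_1)}{u(x_2,T_2)}\le\frac d2\log\frac{T_2}{T_1}+\frac{H_\psi\,\mathrm{dist}(x_1,x_2)^2}{T_2-T_1}. \]
   Context: A finite graph $G=(V,E)$: finite set $V$, irreflexive symmetric relation $E$; $v\sim w$ iff $(v,w)\in E$; $\mathrm{dist}$ is the combinatorial path distance; connected means all distances are finite. $C^+(V)$: positive functions. Laplacian $\Delta f(v)=\sum_{w\sim v}(f(w)-f(v))$. For $f\in C^+(V)$: $(\Delta^\psi f)(v):=\Delta\big[\psi\big(\tfrac{f}{f(v)}\big)\big](v)$; $(\Omega^\psi f)(v):=\Delta\Big[\psi'\big(\tfrac{f}{f(v)}\big)\cdot\tfrac{f}{f(v)}\cdot\big(\tfrac{\Delta f}{f}-\tfrac{(\Delta f)(v)}{f(v)}\big)\Big](v)$; $2\Gamma_2^\psi(f):=\Omega^\psi f+\frac{\Delta f\,\Delta^\psi f}{f}-\frac{\Delta(f\,\Delta^\psi f)}{f}$. $CD\psi(d,0)$: $\Gamma_2^\psi(f)\ge\frac1d(\Delta^\psi f)^2$ for all $f\in C^+(V)$. $\overline{\psi}(x):=\psi'(1)(x-1)-(\psi(x)-\psi(1))$, $H_\psi:=\sup_{x>1}\frac{(\log x)^2}{\overline{\psi}(x)}$.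 A solution to the heat equation is $u:V\times[0,\infty)\to\mathbb{R}$, continuously differentiable in $t$, with $\Delta u=\partial_tu$. *)

From Stdlib Require Import Reals Lra List.
Import ListNotations.
Open Scope R_scope.

Definition finite_graph {V : Type} (vs : list V) (adj : V -> V -> bool) : Prop :=
  NoDup vs /\ (forall v, In v vs) /\
  (forall v w, adj v w = adj w v) /\ (forall v, adj v v = false).

Inductive walk {V : Type} (adj : V -> V -> bool) : V -> V -> nat -> Prop :=
| walk0 : forall x, walk adj x x 0
| walkS : forall x y z n, adj x y = true -> walk adj y z n -> walk adj x z (S n).

Definition connected {V : Type} (adj : V -> V -> bool) : Prop :=
  forall x y, exists n, walk adj x y n.

Definition is_dist {V : Type} (adj : V -> V -> bool) (x y : V) (n : nat) : Prop :=
  walk adj x y n /\ forall m, walk adj x y m -> (n <= m)%nat.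

Definition Lap {V : Type} (vs : list V) (adj : V -> V -> bool) (f : V -> R) (v : V) : R :=
  fold_right Rplus 0 (map (fun w => if adj v w then f w - f v else 0) vs).

Definition DeltaPsi {V : Type} (vs : list V) (adj : V -> V -> bool)
  (psi : R -> R) (f : V -> R) (v : V) : R :=
  Lap vs adj (fun w => psi (f w / f v)) v.

Definition OmegaPsi {V : Type} (vs : list V) (adj : V -> V -> bool)
  (psi' : R -> R) (f : V -> R) (v : V) : R :=
  Lap vs adj (fun w => psi' (f w / f v) * (f w / f v)
                       * (Lap vs adj f w / f w - Lap vs adj f v / f v)) v.

Definition Gamma2Psi {V : Type} (vs : list V) (adj : V -> V -> bool)
  (psi psi' : R -> R) (f : V -> R) (v : V) : R :=
  (OmegaPsi vs adj psi' f v
   + Lap vs adj f v * DeltaPsi vs adj psi f v / f v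
   - Lap vs adj (fun w => f w * DeltaPsi vs adj psi f w) v / f v) / 2.

Definition CDpsi {V : Type} (vs : list V) (adj : V -> V -> bool)
  (psi psi' : R -> R) (d : R) : Prop :=
  forall f : V -> R, (forall w, 0 < f w) ->
  forall v, Gamma2Psi vs adj psi psi' f v >= / d * (DeltaPsi vs adj psi f v) ^ 2.

Definition C1_pos (psi psi' : R -> R) : Prop :=
  forall x, 0 < x -> derivable_pt_lim psi x (psi' x) /\ continuity_pt psi' x.

Definition concave_pos (psi : R -> R) : Prop :=
  forall x y t, 0 < x -> 0 < y -> 0 <= t <= 1 ->
  t * psi x + (1 - t) * psi y <= psi (t * x + (1 - t) * y).

Definition psibar (psi psi' : R -> R) (x : R) : R :=
  psi' 1 * (x - 1) - (psi x - psi 1).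

(* H_psi < oo and H_psi = H: every ratio (log x)^2 / psibar x (x > 1) is a finite
   real (psibar x > 0) and H is the supremum of these ratios. *)
Definition H_psi_finite_eq (psi psi' : R -> R) (H : R) : Prop :=
  (forall x, 1 < x -> 0 < psibar psi psi' x) /\
  is_lub (fun r => exists x, 1 < x /\ r = (ln x) ^ 2 / psibar psi psi' x) H.

(* u is a solution to the heat equation on V x [0,oo), positive there.
   Derivative for t > 0 two-sided, at t = 0 the right derivative.
   (The t-derivative Delta u(.,t)(v) is then automatically continuous on [0,oo).) *)
Definition pos_heat_solution {V : Type} (vs : list V) (adj : V -> V -> bool)
  (u : V -> R -> R) : Prop :=
  (forall v t, 0 <= t -> 0 < u v t) /\
  (forall v t, 0 < t -> derivable_pt_lim (u v) t (Lap vs adj (fun w => u w t) v)) /\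
  (forall v, limit1_in (fun h => (u v h - u v 0) / h) (fun h => 0 < h)
                       (Lap vs adj (fun w => u w 0) v) 0).

(* Li–Yau via a maximum principle: at a minimum of (t - a) Δ^ψ u over [a, T] x V the time
   derivative is <= 0 and, since Δ^ψ u is spatially minimal there, CDψ(d,0) reduces to
   (Δ^ψ u)^2 <= (d/2) Ω^ψ u = (d/2) ∂_t Δ^ψ u; this forces Δ^ψ u >= -d/(2t).
   Since ψ'(1) = 1, Δu/u - Δ^ψ u = Σ_{w~v} ψ̄(u(w)/u(v)) with ψ̄ >= 0 by concavity, and a
   neighbour with u(w) >= u(v) contributes at least (log u(w)/u(v))^2 / H_ψ. So f = log u
   satisfies ∂_t f >= -d/(2t), and ∂_t f(v) >= -d/(2t) + (f(w) - f(v))^2 / H_ψ when f(w) >= f(v).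
   Along one edge this is a Riccati inequality, giving an error H_ψ/h over a time step h;
   n equal steps along a shortest path give n H_ψ/h = H_ψ n^2/(T2 - T1). *)

From Stdlib Require Import Reals Lra List.
Open Scope R_scope.

Local Notation lsum l g := (fold_right Rplus 0 (map g l)).

Section ListSums.

Context {V : Type}.
Implicit Types (l : list V) (g h : V -> R).

Lemma sum_map_ext l g h :
  (forall w, In w l -> g w = h w) -> lsum l g = lsum l h.
Proof. intro E; f_equal; apply map_ext_in; exact E. Qed.

Lemma sum_map_nonneg l g : (forall w, In w l -> 0 <= g w) -> 0 <= lsum l g.
Proof.
  induction l as [|w l IH]; intro Hg; simpl; [lra|].
  assert (0 <= g w) by (apply Hg; left; reflexivity).
  assert (0 <= lsum l g) by (apply IH; intros; apply Hg; right; assumption).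
  lra.
Qed.

Lemma sum_map_ge_term l g y :
  (forall w, In w l -> 0 <= g w) -> In y l -> g y <= lsum l g.
Proof.
  induction l as [|w l IH]; intros Hg Hy; simpl; [destruct Hy|].
  assert (0 <= g w) by (apply Hg; left; reflexivity).
  assert (Hl : forall w, In w l -> 0 <= g w) by (intros; apply Hg; right; assumption).
  destruct Hy as [<-|Hy].
  - assert (0 <= lsum l g) by (apply sum_map_nonneg; exact Hl). lra.
  - specialize (IH Hl Hy). lra.
Qed.

Lemma sum_map_mult_r l g c : lsum l g * c = lsum l (fun w => g w * c).
Proof. induction l as [|w l IH]; simpl; [ring|]. rewrite <- IH. ring. Qed.

Lemma sum_map_minus l g h : lsum l g - lsum l h = lsum l (fun w => g w - h w).
Proof. induction l as [|w l IH]; simpl; [ring|]. rewrite <- IH. ring. Qed.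

Lemma derivable_pt_lim_sum_map l (F : V -> R -> R) (F' : V -> R) t :
  (forall w, In w l -> derivable_pt_lim (F w) t (F' w)) ->
  derivable_pt_lim (fun s => lsum l (fun w => F w s)) t (lsum l F').
Proof.
  induction l as [|w l IH]; intro HF; simpl.
  - exact (derivable_pt_lim_const 0 t).
  - apply (derivable_pt_lim_plus (F w) (fun s => lsum l (fun w => F w s))).
    + apply HF; left; reflexivity.
    + apply IH; intros; apply HF; right; assumption.
Qed.

End ListSums.

Lemma derivable_pt_lim_local_min_right f x l r :
  0 < r -> (forall y, x < y < x + r -> f x <= f y) ->
  derivable_pt_lim f x l -> 0 <= l.
Proof.
  intros Hr Hmin Hd. apply Rnot_lt_le; intro Hl.
  destruct (Hd (- l) ltac:(lra)) as [del Hdel].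
  pose proof (cond_pos del) as Hdel0.
  pose proof (Rmin_l del r). pose proof (Rmin_r del r).
  assert (0 < Rmin del r) by (apply Rmin_glb_lt; lra).
  set (h := Rmin del r / 2).
  assert (Hh : 0 < h) by (unfold h; lra).
  assert (Hq : 0 <= (f (x + h) - f x) / h).
  { apply Rmult_le_pos; [|left; apply Rinv_0_lt_compat; exact Hh].
    assert (f x <= f (x + h)) by (apply Hmin; unfold h; lra). lra. }
  destruct (Rabs_def2 _ _ (Hdel h ltac:(lra) ltac:(rewrite Rabs_right; unfold h; lra))).
  lra.
Qed.

Lemma derivable_pt_lim_local_min_left f x l r :
  0 < r -> (forall y, x - r < y < x -> f x <= f y) ->
  derivable_pt_lim f x l -> l <= 0.
Proof.
  intros Hr Hmin Hd.
  enough (0 <= l * -1) by lra.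
  apply (derivable_pt_lim_local_min_right (fun y => f (- y)) (- x) _ r Hr).
  - intros y Hy. rewrite Ropp_involutive. apply Hmin; lra.
  - apply (derivable_pt_lim_comp Ropp f).
    + exact (derivable_pt_lim_opp id _ _ (derivable_pt_lim_id (- x))).
    + rewrite Ropp_involutive. exact Hd.
Qed.

Lemma concave_pos_tangent psi l x0 s :
  concave_pos psi -> 0 < x0 -> 0 < s -> derivable_pt_lim psi x0 l ->
  psi s - psi x0 <= l * (s - x0).
Proof.
  intros Hconc Hx0 Hs Hd.
  set (g := fun t => psi (x0 + (s - x0) * t) - (psi s - psi x0) * t).
  enough (0 <= l * ((s - x0) * 1) - (psi s - psi x0) * 1) by lra.
  apply (derivable_pt_lim_local_min_right g 0 _ 1 Rlt_0_1).
  - intros t Ht. unfold g.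
    pose proof (Hconc s x0 t Hs Hx0 ltac:(lra)) as Hc.
    replace (t * s + (1 - t) * x0) with (x0 + (s - x0) * t) in Hc by ring.
    replace (x0 + (s - x0) * 0) with x0 by ring. lra.
  - apply (derivable_pt_lim_minus (fun t => psi (x0 + (s - x0) * t))
                                  (mult_real_fct (psi s - psi x0) id)).
    + apply (derivable_pt_lim_comp (fun t => x0 + (s - x0) * t) psi).
      * replace ((s - x0) * 1) with (0 + (s - x0) * 1) by ring.
        apply (derivable_pt_lim_plus (fct_cte x0) (mult_real_fct (s - x0) id)).
        -- apply derivable_pt_lim_const.
        -- apply derivable_pt_lim_scal, derivable_pt_lim_id.
      * replace (x0 + (s - x0) * 0) with x0 by ring. exact Hd.
    + apply derivable_pt_lim_scal, derivable_pt_lim_id.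
Qed.

Lemma decrease_le_ln_ratio (f f' : R -> R) c a b :
  (forall t, 0 < t -> derivable_pt_lim f t (f' t)) ->
  (forall t, 0 < t -> - c / t <= f' t) ->
  0 < a -> a <= b -> f a - f b <= c * (ln b - ln a).
Proof.
  intros Hf Hf' Ha [Hab|<-]; [|lra].
  destruct (MVT_cor2 (fun t => f t + c * ln t) (fun t => f' t + c * / t) a b Hab)
    as (e & He & Hea).
  { intros t Ht. apply (derivable_pt_lim_plus f (mult_real_fct c ln)).
    - apply Hf; lra.
    - apply derivable_pt_lim_scal, derivable_pt_lim_ln; lra. }
  assert (0 <= f' e + c * / e).
  { pose proof (Hf' e ltac:(lra)). unfold Rdiv in *. lra. }
  assert (0 <= (f' e + c * / e) * (b - a)) by (apply Rmult_le_pos; lra).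
  lra.
Qed.

(* The Riccati inequality w' <= -w^2/H makes 1/w grow at rate at least 1/H. *)
Lemma riccati_bound (w w' : R -> R) H a b :
  0 < H -> a < b ->
  (forall t, a <= t <= b -> derivable_pt_lim w t (w' t)) ->
  (forall t, a < t < b -> w' t <= 0) ->
  (forall t, a < t < b -> 0 < w t -> w' t <= - (w t ^ 2 / H)) ->
  w b <= H / (b - a).
Proof.
  intros HH Hab Hw Hdecr Hric.
  destruct (Rle_or_lt (w b) 0) as [Hb|Hb].
  { assert (0 < H / (b - a)) by (apply Rdiv_lt_0_compat; lra). lra. }
  assert (Hpos : forall t, a <= t <= b -> 0 < w t).
  { intros t [Ht [Htb|<-]]; [|exact Hb].
    destruct (MVT_cor2 w w' t b Htb) as (e & He & Hte).
    { intros s Hs. apply Hw; lra. }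
    assert (w' e * (b - t) <= 0) by (assert (w' e <= 0) by (apply Hdecr; lra); nra).
    lra. }
  destruct (MVT_cor2 (fun t => 1 / w t) (fun t => (0 * w t - w' t * 1) / (w t)²) a b Hab)
    as (e & He & Hae).
  { intros t Ht. apply (derivable_pt_lim_div (fct_cte 1) w).
    - apply derivable_pt_lim_const.
    - apply Hw; exact Ht.
    - apply Rgt_not_eq, Hpos; exact Ht. }
  assert (Hwe : 0 < w e) by (apply Hpos; lra).
  assert (Hgrowth : / H <= (0 * w e - w' e * 1) / (w e)²).
  { pose proof (Hric e Hae Hwe) as Hr.
    replace ((0 * w e - w' e * 1) / (w e)²) with (- w' e * / w e ^ 2)
      by (unfold Rsqr; field; lra).
    apply Rmult_le_reg_r with (w e ^ 2); [nra|].
    rewrite Rmult_assoc, Rinv_l by (apply pow_nonzero; lra).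
    unfold Rdiv in Hr. lra. }
  assert (Hwa : 0 < 1 / w a) by (apply Rdiv_lt_0_compat; [lra|apply Hpos; lra]).
  assert (Hinv : (b - a) * / H < 1 / w b).
  { assert (/ H * (b - a) <= (0 * w e - w' e * 1) / (w e)² * (b - a))
      by (apply Rmult_le_compat_r; lra).
    lra. }
  apply Rmult_lt_compat_r with (r := w b * H / (b - a)) in Hinv.
  2:{ apply Rdiv_lt_0_compat; [apply Rmult_lt_0_compat|]; lra. }
  replace ((b - a) * / H * (w b * H / (b - a))) with (w b) in Hinv by (field; lra).
  replace (1 / w b * (w b * H / (b - a))) with (H / (b - a)) in Hinv by (field; lra).
  lra.
Qed.

Section Harnack.

Variables (V : Type) (adj : V -> V -> bool) (f f' : V -> R -> R) (c H : R).
Hypothesis adj_sym : forall v w, adj v w = adj w v.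
Hypothesis H_gt0 : 0 < H.
Hypothesis f_deriv : forall v t, 0 < t -> derivable_pt_lim (f v) t (f' v t).
Hypothesis f_deriv_ge : forall v t, 0 < t -> - c / t <= f' v t.
Hypothesis f_deriv_ge_edge : forall v w t, 0 < t -> adj v w = true -> f v t <= f w t ->
  - c / t + (f w t - f v t) ^ 2 / H <= f' v t.

(* Compare w(t) = f x a - c (ln t - ln a) - f y t, a lower bound for f x t - f y t,
   with the Riccati equation. *)
Lemma harnack_edge x y a b :
  adj x y = true -> 0 < a -> a < b ->
  f x a - f y b <= c * (ln b - ln a) + H / (b - a).
Proof.
  intros Hxy Ha Hab.
  set (w := fun t => f x a + c * ln a - c * ln t - f y t).
  set (w' := fun t => 0 - c * / t - f' y t).
  enough (w b <= H / (b - a)) by (unfold w in *; lra).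
  apply (riccati_bound w w' H a b H_gt0 Hab).
  - intros t Ht.
    apply (derivable_pt_lim_minus (fun t => f x a + c * ln a - c * ln t) (f y)).
    + apply (derivable_pt_lim_minus (fct_cte (f x a + c * ln a)) (mult_real_fct c ln)).
      * apply derivable_pt_lim_const.
      * apply derivable_pt_lim_scal, derivable_pt_lim_ln; lra.
    + apply f_deriv; lra.
  - intros t Ht. pose proof (f_deriv_ge y t ltac:(lra)).
    unfold w', Rdiv in *. lra.
  - intros t Ht Hwt.
    assert (Hfx : f x a - f x t <= c * (ln t - ln a))
      by (apply (decrease_le_ln_ratio (f x) (f' x)); auto; lra).
    assert (Hwf : w t <= f x t - f y t) by (unfold w; lra).
    pose proof (f_deriv_ge_edge y x t ltac:(lra) ltac:(rewrite adj_sym; exact Hxy)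
                  ltac:(lra)) as Hedge.
    assert (w t ^ 2 / H <= (f x t - f y t) ^ 2 / H).
    { apply Rmult_le_compat_r; [left; apply Rinv_0_lt_compat; exact H_gt0|nra]. }
    unfold w', Rdiv in *. lra.
Qed.

Lemma harnack_walk_steps x z n :
  walk adj x z n -> forall a h, 0 < a -> 0 < h ->
  f x a - f z (a + INR n * h) <= c * (ln (a + INR n * h) - ln a) + INR n * H / h.
Proof.
  induction 1 as [x|x y z n Hxy Hw IH]; intros a h Ha Hh.
  - simpl. replace (a + 0 * h) with a by ring. lra.
  - pose proof (harnack_edge x y a (a + h) Hxy Ha ltac:(lra)) as Hstep.
    pose proof (IH (a + h) h ltac:(lra) Hh) as Hrest.
    rewrite S_INR.
    replace (a + (INR n + 1) * h) with (a + h + INR n * h) by ring.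
    replace (a + h - a) with h in Hstep by ring.
    replace ((INR n + 1) * H / h) with (INR n * H / h + H / h) by (field; lra).
    lra.
Qed.

(* Spreading [b - a] evenly over the [n] edges of the walk. *)
Lemma harnack_walk x z n a b :
  walk adj x z n -> 0 < a -> a < b ->
  f x a - f z b <= c * (ln b - ln a) + H * INR n ^ 2 / (b - a).
Proof.
  intros Hw Ha Hab.
  destruct n as [|m].
  - inversion Hw; subst.
    pose proof (decrease_le_ln_ratio (f z) (f' z) c a b (f_deriv z) (f_deriv_ge z) Ha
                  ltac:(lra)).
    simpl. replace (H * 0 ^ 2 / (b - a)) with 0 by (field; lra). lra.
  - assert (Hn : 0 < INR (S m)) by (apply lt_0_INR, Nat.lt_0_succ).
    set (h := (b - a) / INR (S m)).
    pose proof (harnack_walk_steps x z (S m) Hw a h Ha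
                  ltac:(apply Rdiv_lt_0_compat; lra)) as Hsteps.
    replace (a + INR (S m) * h) with b in Hsteps by (unfold h; field; lra).
    replace (INR (S m) * H / h) with (H * INR (S m) ^ 2 / (b - a)) in Hsteps
      by (unfold h; field; lra).
    exact Hsteps.
Qed.

End Harnack.

Lemma continuity_ab_min_list {V : Type} (G : V -> R -> R) a b (v0 : V) (l : list V) :
  a <= b -> (forall v t, a <= t <= b -> continuity_pt (G v) t) ->
  exists v t, a <= t <= b /\
    forall w s, In w (v0 :: l) -> a <= s <= b -> G v t <= G w s.
Proof.
  intros Hab Hc. induction l as [|w l IH].
  - destruct (continuity_ab_min (G v0) a b Hab (Hc v0)) as (t & Hmin & Ht).
    exists v0, t. split; [exact Ht|]. intros w s [<-|[]] Hs. apply Hmin, Hs.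
  - destruct IH as (v & t & Ht & Hmin).
    destruct (continuity_ab_min (G w) a b Hab (Hc w)) as (t' & Hmin' & Ht').
    destruct (Rle_lt_dec (G v t) (G w t')) as [Hle|Hlt].
    + exists v, t. split; [exact Ht|]. intros w' s Hw' Hs.
      destruct Hw' as [<-|[<-|Hw']].
      * apply Hmin; [left; reflexivity|exact Hs].
      * specialize (Hmin' s Hs). lra.
      * apply Hmin; [right; exact Hw'|exact Hs].
    + exists w, t'. split; [exact Ht'|]. intros w' s Hw' Hs.
      destruct Hw' as [<-|[<-|Hw']].
      * specialize (Hmin v0 s (or_introl eq_refl) Hs). lra.
      * apply Hmin', Hs.
      * specialize (Hmin w' s (or_intror Hw') Hs). lra.
Qed.

Section GraphIdentities.

Context {V : Type}.
Variables (vs : list V) (adj : V -> V -> bool).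

Lemma Lap_mult_sub (g h : V -> R) v :
  Lap vs adj (fun w => g w * h w) v - Lap vs adj g v * h v
  = lsum vs (fun w => if adj v w then g w * (h w - h v) else 0).
Proof.
  unfold Lap. rewrite sum_map_mult_r, sum_map_minus. apply sum_map_ext.
  intros w _. destruct (adj v w); ring.
Qed.

Lemma Lap_div_sub_DeltaPsi (psi psi' : R -> R) (g : V -> R) v :
  psi' 1 = 1 -> 0 < g v ->
  Lap vs adj g v / g v - DeltaPsi vs adj psi g v
  = lsum vs (fun w => if adj v w then psibar psi psi' (g w / g v) else 0).
Proof.
  intros Hpsi1 Hg. unfold DeltaPsi, Lap, Rdiv at 1.
  rewrite sum_map_mult_r, sum_map_minus. apply sum_map_ext.
  intros w _. destruct (adj v w); [|ring].
  replace (g v / g v) with 1 by (field; lra).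
  unfold psibar. rewrite Hpsi1. field. lra.
Qed.

End GraphIdentities.

Section Psibar.

Variables (psi psi' : R -> R) (H : R).
Hypothesis H_psi : H_psi_finite_eq psi psi' H.

Lemma H_psi_gt0 : 0 < H.
Proof.
  destruct H_psi as [Hpos [Hub _]].
  assert (0 < ln 2) by (pose proof ln_lt_2; lra).
  assert (0 < psibar psi psi' 2) by (apply Hpos; lra).
  assert (0 < ln 2 ^ 2 / psibar psi psi' 2) by (apply Rdiv_lt_0_compat; nra).
  assert (ln 2 ^ 2 / psibar psi psi' 2 <= H)
    by (apply Hub; exists 2; split; [lra|reflexivity]).
  lra.
Qed.

Lemma psibar_ge_ln_sq s : 1 <= s -> ln s ^ 2 / H <= psibar psi psi' s.
Proof.
  intros [Hs|<-].
  - destruct H_psi as [Hpos [Hub _]].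
    assert (Hps : 0 < psibar psi psi' s) by (apply Hpos, Hs).
    assert (Hr : ln s ^ 2 / psibar psi psi' s <= H)
      by (apply Hub; exists s; split; [exact Hs|reflexivity]).
    pose proof H_psi_gt0.
    apply Rmult_le_compat_r with (r := psibar psi psi' s) in Hr; [|lra].
    replace (ln s ^ 2 / psibar psi psi' s * psibar psi psi' s) with (ln s ^ 2) in Hr
      by (field; lra).
    apply Rmult_le_reg_r with H; [lra|].
    replace (ln s ^ 2 / H * H) with (ln s ^ 2) by (field; lra). lra.
  - unfold psibar. rewrite ln_1. pose proof H_psi_gt0.
    replace (0 ^ 2 / H) with 0 by (field; lra). lra.
Qed.

End Psibar.

Lemma psibar_nonneg (psi psi' : R -> R) s :
  concave_pos psi -> derivable_pt_lim psi 1 (psi' 1) -> 0 < s ->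
  0 <= psibar psi psi' s.
Proof.
  intros Hconc Hd1 Hs.
  pose proof (concave_pos_tangent psi (psi' 1) 1 s Hconc Rlt_0_1 Hs Hd1).
  unfold psibar. lra.
Qed.

Lemma li_yau_algebra d tau D Om :
  0 < d -> 0 < tau -> D + tau * Om <= 0 -> D ^ 2 <= d * Om / 2 -> - d / 2 <= tau * D.
Proof.
  intros Hd Htau Hmin HCD.
  apply Rnot_lt_le; intro Hlt.
  assert (HD : D < 0) by nra.
  assert (tau * D ^ 2 <= - d * D / 2) by nra.
  assert ((tau * D) ^ 2 <= - d * (tau * D) / 2) by nra.
  nra.
Qed.

Lemma ge_of_shifted_ge k T X :
  0 < T -> (forall a, 0 < a < T -> - k <= (T - a) * X) -> - k <= T * X.
Proof.
  intros HT Hshift. apply Rnot_lt_le; intro Hlt.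
  assert (HX : X < 0) by (pose proof (Hshift (T / 2) ltac:(lra)); nra).
  set (e := - k - T * X).
  set (a := Rmin (T / 2) (e / (2 * - X))).
  assert (0 < e / (2 * - X)) by (apply Rdiv_lt_0_compat; unfold e; lra).
  assert (Ha : 0 < a) by (apply Rmin_glb_lt; lra).
  assert (a <= T / 2) by apply Rmin_l.
  assert (Hae : a * - X <= e / 2).
  { apply Rle_trans with (e / (2 * - X) * - X).
    - apply Rmult_le_compat_r; [lra|apply Rmin_r].
    - right. field. lra. }
  pose proof (Hshift a ltac:(lra)). unfold e in Hae. nra.
Qed.

Lemma ln_div a b : 0 < a -> 0 < b -> ln (a / b) = ln a - ln b.
Proof.
  intros Ha Hb. unfold Rdiv.
  rewrite ln_mult, ln_Rinv; [ring|lra|lra|apply Rinv_0_lt_compat; lra].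
Qed.

Section LiYau.

Variables (psi psi' : R -> R) (d : R) (V : Type) (vs : list V) (adj : V -> V -> bool)
  (u : V -> R -> R).
Hypothesis psi_deriv : forall x, 0 < x -> derivable_pt_lim psi x (psi' x).
Hypothesis d_gt0 : 0 < d.
Hypothesis vs_full : forall v, In v vs.
Hypothesis CD : CDpsi vs adj psi psi' d.
Hypothesis u_pos : forall v t, 0 < t -> 0 < u v t.
Hypothesis u_heat : forall v t, 0 < t ->
  derivable_pt_lim (u v) t (Lap vs adj (fun w => u w t) v).

Lemma derivable_pt_lim_DeltaPsi_heat v t : 0 < t ->
  derivable_pt_lim (fun s => DeltaPsi vs adj psi (fun w => u w s) v) t
    (OmegaPsi vs adj psi' (fun w => u w t) v).
Proof.
  intro Ht.
  set (L := fun w => Lap vs adj (fun w => u w t) w).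
  assert (Hratio : forall w, derivable_pt_lim (fun s => psi (u w s / u v s)) t
    (psi' (u w t / u v t) * ((L w * u v t - L v * u w t) / (u v t)²))).
  { intro w. pose proof (u_pos v t Ht). pose proof (u_pos w t Ht).
    apply (derivable_pt_lim_comp (fun s => u w s / u v s) psi).
    - apply derivable_pt_lim_div; [apply u_heat, Ht|apply u_heat, Ht|lra].
    - apply psi_deriv, Rdiv_lt_0_compat; lra. }
  replace (OmegaPsi vs adj psi' (fun w => u w t) v) with (lsum vs (fun w =>
    if adj v w then psi' (u w t / u v t) * ((L w * u v t - L v * u w t) / (u v t)²)
                  - psi' (u v t / u v t) * ((L v * u v t - L v * u v t) / (u v t)²)
    else 0)).
  - apply (derivable_pt_lim_sum_map vs
      (fun w s => if adj v w then psi (u w s / u v s) - psi (u v s / u v s) else 0)).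
    intros w _. destruct (adj v w).
    + apply (derivable_pt_lim_minus (fun s => psi (u w s / u v s))
                                    (fun s => psi (u v s / u v s)));
        apply Hratio.
    + apply derivable_pt_lim_const.
  - unfold OmegaPsi. apply sum_map_ext. intros w _. destruct (adj v w); [|reflexivity].
    pose proof (u_pos v t Ht). pose proof (u_pos w t Ht).
    unfold L, Rsqr. field. lra.
Qed.

(* At a spatial minimum of Δ^ψ g, Δ(g Δ^ψ g) >= Δg Δ^ψ g, which leaves only Ω^ψ g in Γ2^ψ. *)
Lemma DeltaPsi_sq_le_at_min (g : V -> R) v :
  (forall w, 0 < g w) ->
  (forall w, DeltaPsi vs adj psi g v <= DeltaPsi vs adj psi g w) ->
  DeltaPsi vs adj psi g v ^ 2 <= d * OmegaPsi vs adj psi' g v / 2.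
Proof.
  intros Hg Hmin.
  pose proof (CD g Hg v) as HCD. unfold Gamma2Psi in HCD.
  set (D := DeltaPsi vs adj psi g) in *.
  set (P := Lap vs adj (fun w => g w * D w) v - Lap vs adj g v * D v).
  assert (HP : 0 <= P / g v).
  { apply Rmult_le_pos; [|left; apply Rinv_0_lt_compat, Hg].
    unfold P. rewrite (Lap_mult_sub vs adj g D).
    apply sum_map_nonneg. intros w _. destruct (adj v w); [|lra].
    pose proof (Hg w). pose proof (Hmin w). apply Rmult_le_pos; lra. }
  assert (Lap vs adj g v * D v / g v - Lap vs adj (fun w => g w * D w) v / g v = - (P / g v))
    by (unfold P; field; apply Rgt_not_eq, Hg).
  assert (HCD' : / d * D v ^ 2 <= OmegaPsi vs adj psi' g v / 2) by lra.
  apply Rmult_le_compat_l with (r := d) in HCD'; [|lra].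
  rewrite <- Rmult_assoc, Rinv_r, Rmult_1_l in HCD' by lra. lra.
Qed.

(* Maximum principle for (t - a) Δ^ψ u over [a, T] x V. *)
Lemma li_yau_shifted a T x : 0 < a -> a < T ->
  - d / 2 <= (T - a) * DeltaPsi vs adj psi (fun w => u w T) x.
Proof.
  intros Ha HaT.
  set (D := fun v t => DeltaPsi vs adj psi (fun w => u w t) v).
  set (Om := fun v t => OmegaPsi vs adj psi' (fun w => u w t) v).
  set (G := fun v t => (t - a) * D v t).
  assert (HG : forall v t, 0 < t -> derivable_pt_lim (G v) t (D v t + (t - a) * Om v t)).
  { intros v t Ht.
    replace (D v t + (t - a) * Om v t) with ((1 - 0) * D v t + (t - a) * Om v t) by ring.
    apply (derivable_pt_lim_mult (fun t => t - a) (D v)).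
    - apply (derivable_pt_lim_minus id (fct_cte a)).
      + apply derivable_pt_lim_id.
      + apply derivable_pt_lim_const.
    - apply derivable_pt_lim_DeltaPsi_heat, Ht. }
  destruct (continuity_ab_min_list G a T x vs ltac:(lra)) as (vm & tm & Htm & Hmin).
  { intros v t Ht. apply derivable_continuous_pt. eexists. apply HG. lra. }
  change (- d / 2 <= G x T).
  apply Rle_trans with (G vm tm); [|apply Hmin; [left; reflexivity|lra]].
  destruct Htm as [[Hatm|<-] HtmT]; [|unfold G; lra].
  assert (Htime : D vm tm + (tm - a) * Om vm tm <= 0).
  { apply (derivable_pt_lim_local_min_left (G vm) tm _ (tm - a)); [lra| |apply HG; lra].
    intros s Hs. apply Hmin; [right; apply vs_full|lra]. }
  assert (Hsq : D vm tm ^ 2 <= d * Om vm tm / 2).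
  { apply DeltaPsi_sq_le_at_min; [intro w; apply u_pos; lra|].
    intro w. assert (G vm tm <= G w tm) by (apply Hmin; [right; apply vs_full|lra]).
    unfold G, D in *. apply Rmult_le_reg_l with (tm - a); lra. }
  apply (li_yau_algebra d (tm - a) (D vm tm) (Om vm tm)); lra.
Qed.

(* The window must start at a > 0, where u is differentiable; then let a -> 0. *)
Lemma li_yau T x : 0 < T -> - d / (2 * T) <= DeltaPsi vs adj psi (fun w => u w T) x.
Proof.
  intro HT.
  assert (HTD : - (d / 2) <= T * DeltaPsi vs adj psi (fun w => u w T) x).
  { apply ge_of_shifted_ge; [exact HT|]. intros a Ha.
    replace (- (d / 2)) with (- d / 2) by field. apply li_yau_shifted; lra. }
  apply Rmult_le_reg_l with T; [exact HT|].
  replace (T * (- d / (2 * T))) with (- (d / 2)) by (field; lra). exact HTD.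
Qed.

Variable H : R.
Hypothesis psi_concave : concave_pos psi.
Hypothesis psi'_1 : psi' 1 = 1.
Hypothesis H_psi : H_psi_finite_eq psi psi' H.

Let psibar_terms_nonneg v t : 0 < t -> forall w, In w vs ->
  0 <= (if adj v w then psibar psi psi' (u w t / u v t) else 0).
Proof.
  intros Ht w _. destruct (adj v w); [|lra].
  apply psibar_nonneg; [exact psi_concave|apply psi_deriv; lra|].
  apply Rdiv_lt_0_compat; apply u_pos, Ht.
Qed.

Lemma ln_heat_deriv_ge v t : 0 < t ->
  - d / (2 * t) <= Lap vs adj (fun w => u w t) v / u v t.
Proof.
  intro Ht.
  pose proof (Lap_div_sub_DeltaPsi vs adj psi psi' (fun w => u w t) v psi'_1
                (u_pos v t Ht)) as E.
  pose proof (sum_map_nonneg _ _ (psibar_terms_nonneg v t Ht)).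
  pose proof (li_yau t v Ht). lra.
Qed.

(* The neighbour w alone contributes at least (ln (u w / u v))^2 / H to Δu/u - Δ^ψ u. *)
Lemma ln_heat_deriv_ge_edge v w t : 0 < t -> adj v w = true -> ln (u v t) <= ln (u w t) ->
  - d / (2 * t) + (ln (u w t) - ln (u v t)) ^ 2 / H
  <= Lap vs adj (fun w => u w t) v / u v t.
Proof.
  intros Ht Hvw Hln.
  pose proof (u_pos v t Ht). pose proof (u_pos w t Ht).
  pose proof (Lap_div_sub_DeltaPsi vs adj psi psi' (fun w => u w t) v psi'_1
                (u_pos v t Ht)) as E.
  pose proof (sum_map_ge_term _ _ w (psibar_terms_nonneg v t Ht) (vs_full w)) as Hw.
  cbv beta in Hw. rewrite Hvw in Hw.
  assert (Hratio : 1 <= u w t / u v t).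
  { destruct (Rlt_or_le (u w t) (u v t)) as [Hlt|Hle].
    - pose proof (ln_increasing (u w t) (u v t) ltac:(lra) Hlt). lra.
    - apply Rmult_le_reg_r with (u v t); [lra|].
      replace (u w t / u v t * u v t) with (u w t) by (field; lra). lra. }
  pose proof (psibar_ge_ln_sq psi psi' H H_psi _ Hratio) as Hbar.
  rewrite ln_div in Hbar by lra.
  pose proof (li_yau t v Ht). lra.
Qed.

End LiYau.

Theorem mainTheorem11
  (psi psi' : R -> R)
  (Hc1 : C1_pos psi psi')
  (Hconc : concave_pos psi)
  (Hd1 : psi' 1 = 1)
  (H : R) (HH : H_psi_finite_eq psi psi' H)
  (d : R) (Hd : 0 < d)
  (V : Type) (vs : list V) (adj : V -> V -> bool)
  (HG : finite_graph vs adj) (Hconn : connected adj)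
  (HCD : CDpsi vs adj psi psi' d)
  (u : V -> R -> R) (Hu : pos_heat_solution vs adj u)
  (x1 x2 : V) (T1 T2 : R) (HT1 : 0 < T1) (HT12 : T1 < T2)
  (n : nat) (Hn : is_dist adj x1 x2 n) :
  ln (u x1 T1 / u x2 T2) <= d / 2 * ln (T2 / T1) + H * (INR n) ^ 2 / (T2 - T1).
Proof.
  destruct HG as (_ & Hall & Hsym & _).
  destruct Hu as (Hpos & Hheat & _).
  destruct Hn as [Hwalk _].
  assert (Hpsi : forall x, 0 < x -> derivable_pt_lim psi x (psi' x))
    by (intros x Hx; apply Hc1, Hx).
  assert (Hu : forall v t, 0 < t -> 0 < u v t) by (intros v t Ht; apply Hpos; lra).
  rewrite ln_div, (ln_div T2 T1) by (try apply Hu; lra).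
  apply (harnack_walk V adj (fun v t => ln (u v t))
           (fun v t => Lap vs adj (fun w => u w t) v / u v t) (d / 2) H Hsym
           (H_psi_gt0 psi psi' H HH)); [| | |exact Hwalk|exact HT1|exact HT12].
  - intros v t Ht.
    replace (Lap vs adj (fun w => u w t) v / u v t)
      with (/ u v t * Lap vs adj (fun w => u w t) v) by (unfold Rdiv; ring).
    apply (derivable_pt_lim_comp (u v) ln); [apply Hheat, Ht|].
    apply derivable_pt_lim_ln, Hu, Ht.
  - intros v t Ht. replace (- (d / 2) / t) with (- d / (2 * t)) by (field; lra).
    apply (ln_heat_deriv_ge psi psi' d V vs adj u); assumption.
  - intros v w t Ht Hvw Hln. replace (- (d / 2) / t) with (- d / (2 * t)) by (field; lra).
    apply (ln_heat_deriv_ge_edge psi psi' d V vs adj u); assumption.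
Qed.
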